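(* Let $Q\in\mathbb{R}^{n\times n}$ be symmetric nonsingular with eigenvalues $\lambda_1\ge\dots\ge\lambda_{n-1}>0>\lambda_n$ and orthonormal eigenvectors $u_1,\dots,u_n$ ($Qu_i=\lambda_iu_i$), and let $A\in\mathbb{R}^{n\times n}$. If $\eta\in\mathbb{R}$ satisfies $A^TQ+QA-\eta Q\preceq0$, then $$\max_{1\le i\le n-1}u_i^T(A^T+A)u_i\le\eta\le u_n^T(A^T+A)u_n.$$
   Context: $\preceq0$ denotes negative semidefiniteness. *)

From HB Require Import structures.
From mathcomp Require Import all_boot all_order all_algebra.
Set Implicit Arguments. Unset Strict Implicit. Unset Printing Implicit Defensive.
Import Order.TTheory GRing.Theory Num.Theory.
Local Open Scope ring_scope.

Definition nsd (R : realFieldType) (n : nat) (M : 'M[R]_n) : Prop :=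
  forall x : 'cV[R]_n, (x^T *m M *m x) 0 0 <= 0.

From HB Require Import structures.
From mathcomp Require Import all_boot all_order all_algebra.
Import Order.TTheory GRing.Theory Num.Theory.
Local Open Scope ring_scope.

(* At an eigenvector x of the symmetric Q (eigenvalue l), the quadratic form of
   A^T Q + Q A - eta Q is l times that of A^T + A - eta I; so its sign, fixed by
   negative semidefiniteness, bounds x^T (A^T + A) x by eta from the side given
   by the sign of l. *)

Section EigenLyapunov.

Variables (R : comPzRingType) (n : nat) (Q A : 'M[R]_n) (x : 'cV[R]_n) (l eta : R).
Hypotheses (symQ : Q^T = Q) (eigQx : Q *m x = l *: x).

Lemma trmx_eigen_mul : x^T *m Q = l *: x^T.
Proof. by rewrite -symQ -trmx_mul eigQx linearZ. Qed.

Lemma lyapunov_form_eigen :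
  x^T *m (A^T *m Q + Q *m A - eta *: Q) *m x =
  l *: (x^T *m (A^T + A) *m x - eta *: (x^T *m x)).
Proof.
have eQA : x^T *m (A^T *m Q) *m x = l *: (x^T *m A^T *m x).
  by rewrite mulmxA -mulmxA eigQx scalemxAr.
have eAQ : x^T *m (Q *m A) *m x = l *: (x^T *m A *m x).
  by rewrite mulmxA trmx_eigen_mul -!scalemxAl.
have eQ : x^T *m (eta *: Q) *m x = l *: (eta *: (x^T *m x)).
  by rewrite -scalemxAr -scalemxAl -mulmxA eigQx -scalemxAr scalerA mulrC scalerA.
by rewrite !mulmxDr !mulmxDl mulmxN mulNmx eQA eAQ eQ scalerBr scalerDr.
Qed.

End EigenLyapunov.

Lemma nsd_lyapunov_unit_eigen (R : realFieldType) (n : nat) (Q A : 'M[R]_n)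
    (x : 'cV[R]_n) (l eta : R) :
  Q^T = Q -> Q *m x = l *: x -> x^T *m x = 1%:M ->
  nsd (A^T *m Q + Q *m A - eta *: Q) ->
  l * ((x^T *m (A^T + A) *m x) 0 0 - eta) <= 0.
Proof.
move=> symQ eigQx unit_x nsdM; have := nsdM x.
rewrite (@lyapunov_form_eigen _ _ Q A x l eta symQ eigQx) unit_x.
by rewrite !mxE /= mulr1n mulr1.
Qed.

Theorem corollary3p22 (R : realFieldType) (m : nat)
  (Q A : 'M[R]_(m.+1)) (lam : 'I_(m.+1) -> R) (u : 'I_(m.+1) -> 'cV[R]_(m.+1))
  (eta : R) :
  Q^T = Q ->
  Q \in unitmx ->
  (forall i j : 'I_(m.+1), (i <= j)%N -> lam j <= lam i) ->
  (forall i : 'I_(m.+1), i != ord_max -> 0 < lam i) ->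
  lam ord_max < 0 ->
  (forall i j : 'I_(m.+1), (u i)^T *m u j = (i == j)%:R%:M) ->
  (forall i : 'I_(m.+1), Q *m u i = lam i *: u i) ->
  nsd (A^T *m Q + Q *m A - eta *: Q) ->
  (forall i : 'I_(m.+1), i != ord_max ->
     ((u i)^T *m (A^T + A) *m u i) 0 0 <= eta) /\
  eta <= ((u ord_max)^T *m (A^T + A) *m u ord_max) 0 0.
Proof.
move=> symQ _ _ lam_pos lam_neg orth eig nsdM.
have sign_bound i : lam i * (((u i)^T *m (A^T + A) *m u i) 0 0 - eta) <= 0.
  by apply: nsd_lyapunov_unit_eigen nsdM; rewrite ?orth ?eqxx.
split=> [i /lam_pos lam_i_pos | ].
  by have := sign_bound i; rewrite pmulr_rle0 // subr_le0.
by have := sign_bound ord_max; rewrite nmulr_rle0 // subr_ge0.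
Qed.
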